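(* Let $S_A>0$, $\theta\geq0$, $\lambda\geq0$, $B\geq1$ an integer, $V_k\in(0,1]$ and $S_M\geq0$. Let $\rho(\zeta)=\zeta e^{-\zeta}$, $\hat\nu(V,\Lambda)=V/(1+V\Lambda)$, and for $\zeta\in(0,1)$ let $$g(S_M,\zeta,V_k)=\sum_{r=0}^{B}\binom{B}{r}\rho(\zeta)^r(1-\rho(\zeta))^{B-r}\,\hat\nu\left(V_k,\frac{rS_AS_M}{S_A+S_M}\right)\frac{r-\rho(\zeta)B}{\rho(\zeta)(1-\rho(\zeta))}+\lambda B\frac{e^{\zeta}}{1-\zeta}(1+\theta S_M).$$ Then $\zeta\mapsto g(S_M,\zeta,V_k)$ is an increasing function of $\zeta\in(0,1)$.
   Context: In the decentralized myopic sensing policy (large-network limit, $B$ collision channels), $g$ is, up to the positive factor $e^{\zeta}/(1-\zeta)$, the derivative with respect to the normalized activation probability $\zeta$ of the one-slot cost $\sum_r\mathcal B_B(r;\rho(\zeta))\hat\nu(V_k,rS_AS_M/(S_A+S_M))+\lambda\zeta B(1+\theta S_M)$; here $V_k$ is the prior variance, $S_A$ the ambient SNR, $S_M$ the local measurement SNR. *)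

From Stdlib Require Import Reals.
Open Scope R_scope.

Definition rho (z : R) : R := z * exp (- z).

Definition nu_hat (V L : R) : R := V / (1 + V * L).

(* g(S_M, zeta, V_k), with the remaining parameters S_A, theta, lambda, B explicit.
   sum_f_R0 f B = f 0 + ... + f B ;  Binomial.C B r is the real binomial coefficient. *)
Definition g (SA theta lambda : R) (B : nat) (SM z Vk : R) : R :=
  sum_f_R0 (fun r : nat =>
      C B r * rho z ^ r * (1 - rho z) ^ (B - r)
      * nu_hat Vk (INR r * SA * SM / (SA + SM))
      * ((INR r - rho z * INR B) / (rho z * (1 - rho z)))) B
  + lambda * INR B * (exp z / (1 - z)) * (1 + theta * SM).

(* For X ~ Bin(B, p), the first term of g is
   Cov(nu(X), X) / (p (1 - p)), where nu(r) = nu_hat(V_k, r S_A S_M / (S_A + S_M)).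
   The binomial Stein identity rewrites it as B E[nu(Y + 1) - nu(Y)] with
   Y ~ Bin(B - 1, p).  Since nu_hat(V, .) is convex, the increments of nu are
   nondecreasing, so this expectation is nondecreasing in p; and p = rho(zeta) is
   increasing on (0, 1).  The second term of g is increasing because e^zeta and
   1 / (1 - zeta) are. *)
From Stdlib Require Import Reals Lra Lia Psatz.
Open Scope R_scope.

Lemma C_n_n n : C n n = 1.
Proof.
  unfold C; rewrite Nat.sub_diag; simpl (Factorial.fact 0).
  pose proof (INR_fact_neq_0 n); simpl INR; field; auto.
Qed.

Lemma C_n_0 n : C n 0 = 1.
Proof.
  unfold C; rewrite Nat.sub_0_r; simpl.
  pose proof (INR_fact_neq_0 n); field; auto.
Qed.

Lemma C_ge_0 n r : 0 <= C n r.
Proof.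
  unfold C.
  pose proof (INR_fact_lt_0 n); pose proof (INR_fact_lt_0 r);
    pose proof (INR_fact_lt_0 (n - r)).
  apply Rlt_le, Rdiv_lt_0_compat; auto.
  apply Rmult_lt_0_compat; auto.
Qed.

Lemma sum_pascal (h : nat -> R) n :
  sum_f_R0 (fun r => C (S n) r * h r) (S n) =
  sum_f_R0 (fun r => C n r * h r) n + sum_f_R0 (fun r => C n r * h (S r)) n.
Proof.
  destruct n as [|m].
  - simpl; rewrite !C_n_n; unfold C; simpl; field.
  - rewrite (decomp_sum _ (S (S m))) by lia; simpl pred.
    rewrite tech5, (decomp_sum (fun r => C (S m) r * h r) (S m)) by lia; simpl pred.
    rewrite (tech5 (fun r => C (S m) r * h (S r))), C_n_n.
    assert (Hmid : sum_f_R0 (fun i => C (S (S m)) (S i) * h (S i)) m =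
      sum_f_R0 (fun i => C (S m) i * h (S i)) m
      + sum_f_R0 (fun i => C (S m) (S i) * h (S i)) m).
    { rewrite <- plus_sum; apply sum_eq; intros i Hi.
      rewrite <- pascal by lia; ring. }
    rewrite Hmid, !C_n_0, C_n_n; ring.
Qed.

Definition binom_wt (n : nat) (p : R) (r : nat) : R :=
  C n r * (p ^ r * (1 - p) ^ (n - r)).

Definition binom_mean (n : nat) (a : nat -> R) (p : R) : R :=
  sum_f_R0 (fun r => binom_wt n p r * a r) n.

Lemma binom_wt_ge_0 n p r : 0 <= p <= 1 -> 0 <= binom_wt n p r.
Proof.
  intros Hp; unfold binom_wt.
  apply Rmult_le_pos; [apply C_ge_0|].
  apply Rmult_le_pos; apply pow_le; lra.
Qed.

Lemma binom_mean_ext n a b p :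
  (forall r, (r <= n)%nat -> a r = b r) -> binom_mean n a p = binom_mean n b p.
Proof. intros Hab; apply sum_eq; intros r Hr; rewrite Hab; auto. Qed.

Lemma binom_mean_lin n (c d : R) a b p :
  binom_mean n (fun r => c * a r + d * b r) p = c * binom_mean n a p + d * binom_mean n b p.
Proof.
  unfold binom_mean; rewrite !scal_sum, <- plus_sum.
  apply sum_eq; intros; ring.
Qed.

Lemma binom_mean_S n a p :
  binom_mean (S n) a p = (1 - p) * binom_mean n a p + p * binom_mean n (fun r => a (S r)) p.
Proof.
  unfold binom_mean.
  rewrite (sum_eq _ (fun r => C (S n) r * (p ^ r * (1 - p) ^ (S n - r) * a r)))
    by (intros; unfold binom_wt; ring).
  rewrite sum_pascal, <- plus_sum, !scal_sum, <- plus_sum.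
  apply sum_eq; intros i Hi; unfold binom_wt.
  rewrite Nat.sub_succ_l by lia.
  replace (S n - S i)%nat with (n - i)%nat by lia.
  simpl pow; ring.
Qed.

Lemma binom_mean_stein n : forall f p,
  binom_mean n (fun r => f r * (INR r - p * INR n)) p =
  p * (1 - p) * INR n * binom_mean (pred n) (fun r => f (S r) - f r) p.
Proof.
  induction n as [|m IH]; intros f p.
  - unfold binom_mean; simpl; ring.
  - simpl pred; rewrite binom_mean_S.
    rewrite (binom_mean_ext m (fun r => f r * (INR r - p * INR (S m)))
      (fun r => 1 * (f r * (INR r - p * INR m)) + (- p) * f r))
      by (intros; rewrite S_INR; ring).
    rewrite (binom_mean_ext m (fun r => f (S r) * (INR (S r) - p * INR (S m)))
      (fun r => 1 * (f (S r) * (INR r - p * INR m)) + (1 - p) * f (S r)))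
      by (intros; rewrite !S_INR; ring).
    rewrite !binom_mean_lin, !IH.
    assert (Hdiff : binom_mean m (fun r => f (S r) - f r) p
      = 1 * binom_mean m (fun r => f (S r)) p + (- 1) * binom_mean m f p)
      by (rewrite <- binom_mean_lin; apply binom_mean_ext; intros; ring).
    destruct m as [|k]; simpl pred.
    + rewrite Hdiff; simpl INR; ring.
    + transitivity (p * (1 - p) * INR (S k) * binom_mean (S k) (fun r => f (S r) - f r) p
                    + p * (1 - p) * binom_mean (S k) (fun r => f (S r) - f r) p).
      * rewrite (binom_mean_S k (fun r => f (S r) - f r)) at 1; rewrite Hdiff; ring.
      * rewrite (S_INR (S k)); ring.
Qed.

Lemma binom_mean_le_compat n a b p :
  0 <= p <= 1 -> (forall r, a r <= b r) -> binom_mean n a p <= binom_mean n b p.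
Proof.
  intros Hp Hab; apply sum_Rle; intros r _.
  apply Rmult_le_compat_l; [apply binom_wt_ge_0, Hp | apply Hab].
Qed.

(* By [binom_mean_S], E_(n+1)[a] is a convex combination of E_n[a] <= E_n[a (. + 1)]
   putting weight p on the larger one. *)
Lemma binom_mean_incr_p n : forall a, (forall r, a r <= a (S r)) ->
  forall p q, 0 <= p -> p <= q -> q <= 1 -> binom_mean n a p <= binom_mean n a q.
Proof.
  induction n as [|n IH]; intros a Ha p q Hp Hpq Hq.
  - unfold binom_mean; simpl; apply Rle_refl.
  - rewrite !binom_mean_S.
    pose proof (IH a Ha p q Hp Hpq Hq) as Hmono.
    pose proof (IH (fun r => a (S r)) (fun r => Ha (S r)) p q Hp Hpq Hq) as Hmono_S.
    assert (Hshift : binom_mean n a p <= binom_mean n (fun r => a (S r)) p)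
      by (apply binom_mean_le_compat; auto; lra).
    nra.
Qed.

Lemma nu_hat_diff_le V L d : 0 < V -> 0 <= L -> 0 <= d ->
  nu_hat V (L + d) - nu_hat V L <= nu_hat V (L + d + d) - nu_hat V (L + d).
Proof.
  intros HV HL Hd; unfold nu_hat.
  assert (0 <= V * L) by nra; assert (0 <= V * d) by nra.
  assert (Hgap : V / (1 + V * (L + d + d)) - V / (1 + V * (L + d))
      - (V / (1 + V * (L + d)) - V / (1 + V * L)) =
      2 * V * (V * d) ^ 2 / ((1 + V * L) * (1 + V * (L + d)) * (1 + V * (L + d + d)))).
  { field; repeat split; nra. }
  assert (0 <= 2 * V * (V * d) ^ 2
      / ((1 + V * L) * (1 + V * (L + d)) * (1 + V * (L + d + d)))).
  { apply Rmult_le_pos; [apply Rmult_le_pos; [lra | apply pow_le; nra]|].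
    apply Rlt_le, Rinv_0_lt_compat; repeat apply Rmult_lt_0_compat; nra. }
  lra.
Qed.

Lemma nu_hat_lin_diff_incr V c : 0 < V -> 0 <= c -> forall r,
  nu_hat V (INR (S r) * c) - nu_hat V (INR r * c)
  <= nu_hat V (INR (S (S r)) * c) - nu_hat V (INR (S r) * c).
Proof.
  intros HV Hc r; rewrite !S_INR.
  replace ((INR r + 1) * c) with (INR r * c + c) by ring.
  replace ((INR r + 1 + 1) * c) with (INR r * c + c + c) by ring.
  apply nu_hat_diff_le; auto.
  apply Rmult_le_pos; auto using pos_INR.
Qed.

Lemma rho_in_01 z : 0 < z < 1 -> 0 < rho z < 1.
Proof.
  intros Hz; unfold rho.
  pose proof (exp_pos (- z)).
  assert (exp (- z) < 1) by (rewrite <- exp_0; apply exp_increasing; lra).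
  nra.
Qed.

(* With d = z2 - z1 the claim is z1 e^d <= z2, which follows from e^(-d) >= 1 - d
   because z1 <= (1 - d) z2 when z2 <= 1. *)
Lemma rho_le_compat z1 z2 : 0 < z1 -> z1 < z2 -> z2 <= 1 -> rho z1 <= rho z2.
Proof.
  intros H1 H12 H2; unfold rho.
  set (d := z2 - z1).
  assert (Hsplit : exp (- z1) = exp (- z2) * exp d)
    by (rewrite <- exp_plus; f_equal; unfold d; ring).
  assert (Hinv : exp d * exp (- d) = 1)
    by (rewrite <- exp_plus, <- exp_0; f_equal; ring).
  assert (Htangent : 1 + - d < exp (- d)) by (apply exp_ineq1; unfold d; lra).
  pose proof (exp_pos (- z2)); pose proof (exp_pos d); pose proof (exp_pos (- d)).
  assert (Hkey : z1 * exp d <= z2).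
  { assert (z1 <= z2 * exp (- d)) by (unfold d in *; nra).
    nra. }
  rewrite Hsplit; nra.
Qed.

Lemma exp_div_1m_le_compat z1 z2 : z1 < z2 -> z2 < 1 ->
  exp z1 / (1 - z1) <= exp z2 / (1 - z2).
Proof.
  intros H12 H2.
  pose proof (exp_pos z1).
  assert (exp z1 < exp z2) by (apply exp_increasing; lra).
  unfold Rdiv; apply Rmult_le_compat; try lra.
  - apply Rlt_le, Rinv_0_lt_compat; lra.
  - apply Rinv_le_contravar; lra.
Qed.

Lemma g_binom_mean SA theta lambda B SM z Vk : 0 < rho z < 1 ->
  g SA theta lambda B SM z Vk =
  INR B * binom_mean (pred B)
    (fun r => nu_hat Vk (INR (S r) * SA * SM / (SA + SM))
              - nu_hat Vk (INR r * SA * SM / (SA + SM))) (rho z)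
  + lambda * INR B * (exp z / (1 - z)) * (1 + theta * SM).
Proof.
  intros Hp; unfold g; f_equal.
  set (p := rho z).
  set (nu := fun r => nu_hat Vk (INR r * SA * SM / (SA + SM))).
  transitivity (binom_mean B (fun r => nu r * (INR r - p * INR B)) p * / (p * (1 - p))).
  - unfold binom_mean; rewrite (Rmult_comm (sum_f_R0 _ _)), scal_sum.
    apply sum_eq; intros i _; unfold binom_wt, nu, Rdiv; ring.
  - rewrite binom_mean_stein; unfold nu; field; unfold p in *; split; lra.
Qed.

Theorem proposition6 :
  forall (SA theta lambda : R) (B : nat) (Vk SM : R),
    0 < SA -> 0 <= theta -> 0 <= lambda -> (1 <= B)%nat ->
    0 < Vk <= 1 -> 0 <= SM ->
    forall z1 z2 : R, 0 < z1 -> z1 < z2 -> z2 < 1 ->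
      g SA theta lambda B SM z1 Vk <= g SA theta lambda B SM z2 Vk.
Proof.
  intros SA theta lambda B Vk SM HSA Htheta Hlambda _ HVk HSM z1 z2 H1 H12 H2.
  pose proof (rho_in_01 z1 ltac:(lra)) as Hrho1.
  pose proof (rho_in_01 z2 ltac:(lra)) as Hrho2.
  rewrite !g_binom_mean by auto.
  apply Rplus_le_compat.
  - apply Rmult_le_compat_l; [apply pos_INR|].
    apply binom_mean_incr_p; [| lra | apply rho_le_compat | lra]; try lra.
    intros r; unfold Rdiv; rewrite !Rmult_assoc.
    apply nu_hat_lin_diff_incr; [lra|].
    repeat apply Rmult_le_pos; try lra.
    apply Rlt_le, Rinv_0_lt_compat; lra.
  - pose proof (pos_INR B).
    apply Rmult_le_compat_r; [nra|].
    apply Rmult_le_compat_l; [nra|].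
    apply exp_div_1m_le_compat; lra.
Qed.
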